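(* Let $G$ be a finitely generated discrete group and let $K$ be a finite subset of $G$. Let $I$ be the two-sided ideal of the group ring $\mathbb{C}G$ generated by $\chi_K$. Then $K$ is an $\mathcal{F}(G)$-Pompeiu set if and only if $I=\mathbb{C}G$.
   Context: Complex-valued functions on $G$ are written as formal sums $f=\sum_{g\in G}a_g g$ with $f(g)=a_g$. $\mathcal{F}(G)$ denotes the set of all complex-valued functions on $G$, and $\mathbb{C}G$ the finitely supported ones, which form a ring under pointwise addition and convolution $f\ast h=\sum_{g\in G}\big(\sum_{x\in G}f(gx^{-1})h(x)\big)g$. For $S\subseteq G$, $\chi_S$ is the characteristic function of $S$. For a class $\mathcal{C}$ of complex-valued functions on $G$ containing $0$, a finite subset $K\subseteq G$ is a $\mathcal{C}$-Pompeiu set if $f=0$ is the only $f\in\mathcal{C}$ satisfying $\sum_{x\in gKh}f(x)=0$ for all $g,h\in G$. *)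

From HB Require Import structures.
From mathcomp Require Import all_boot all_order all_algebra.
From mathcomp Require Import all_classical.
From mathcomp Require Import reals Rstruct.
From mathcomp Require Import complex.
Set Implicit Arguments. Unset Strict Implicit. Unset Printing Implicit Defensive.
Import Order.TTheory GRing.Theory Num.Theory.
Local Open Scope classical_set_scope.
Local Open Scope ring_scope.

Definition CC : Type := (Rdefinitions.R)[i].
HB.instance Definition _ := GRing.ClosedField.on CC.

Section GroupRing.
Variable G : groupType.

Inductive gen_by (S : seq G) : G -> Prop :=
| gen_one : gen_by S 1%g
| gen_mul s g : s \in S -> gen_by S g -> gen_by S (s * g)%g
| gen_mulV s g : s \in S -> gen_by S g -> gen_by S (s^-1 * g)%g.

Definition finitely_generated : Prop := exists S : seq G, forall g, gen_by S g.

(* F(G) : all complex-valued functions; CG : the finitely supported ones *)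
Definition calF : set (G -> CC) := setT.
Definition fin_supp (f : G -> CC) : Prop := finite_set [set g | f g != 0].
Definition CG : set (G -> CC) := [set f | fin_supp f].

Definition conv (f h : G -> CC) : G -> CC :=
  fun g => \sum_(x \in [set: G]) f (g * x^-1)%g * h x.

Definition chi (K : seq G) : G -> CC := fun g => if g \in K then 1 else 0.

Definition two_sided_ideal (c : G -> CC) : set (G -> CC) :=
  [set f | exists (n : nat) (a b : 'I_n -> G -> CC),
      (forall i, fin_supp (a i) /\ fin_supp (b i)) /\
      f = (fun g => \sum_(i < n) conv (conv (a i) c) (b i) g)].

(* C-Pompeiu set: the set gKh is [seq g*k*h | k <- K] (without duplicates) *)
Definition pompeiu (Cl : set (G -> CC)) (K : seq G) : Prop :=
  forall f, Cl f ->
    (forall g h : G, \sum_(x <- undup [seq (g * k * h)%g | k <- K]) f x = 0) ->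
    f = (fun _ => 0).

End GroupRing.

From HB Require Import structures.
From mathcomp Require Import all_boot all_order all_algebra.
From mathcomp Require Import all_classical.
From mathcomp Require Import ring.
Set Implicit Arguments. Unset Strict Implicit. Unset Printing Implicit Defensive.
Import Order.TTheory GRing.Theory Num.Theory.
Local Open Scope classical_set_scope.
Local Open Scope ring_scope.

(* For f : G -> C arbitrary and s finitely supported, pair them by
   <f, s> = sum_x f(x) s(x); the Pompeiu sum of f over gKh is <f, chi_(gKh)>.
   The proof rests on two facts.
   - The two-sided ideal I generated by chi_K is exactly the linear span of the
     translates chi_(uKv): a * chi_K * b = sum_(u,v) a(u) b(v) chi_(uKv), and
     chi_(uKv) = delta_u * chi_K * delta_v.
   - Dual separation in countable dimension: if e is finitely supported and lies
     outside a subspace W of finitely supported functions on a countable set,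
     some f kills W and has <f, e> = 1.  It is built along an enumeration of
     the set, extending a functional on finite windows one point at a time.
   If I = CG, each delta_y is in the span, so f(y) = <f, delta_y> is a
   combination of Pompeiu sums and vanishes when they all do.  Conversely
   I is always in CG; if some e in CG is not in I, then since a finitely
   generated group is countable, dual separation gives f <> 0 all of whose
   Pompeiu sums vanish, so K is not a Pompeiu set. *)

Definition supported (T : eqType) (R : nmodType) (s : T -> R) (r : seq T) : Prop :=
  forall x, s x != 0 -> x \in r.

Lemma fsum_setT_seq (T : choiceType) (R : nmodType) (F : T -> R) (r : seq T) :
  uniq r -> supported F r -> \sum_(x \in [set: T]) F x = \sum_(x <- r) F x.
Proof.
move=> ur Fr; rewrite (fsbig_seq _ _ ur) -(fsbig_widen [set` r] setT) //.
by move=> x [_ /=]; rewrite /preimage /= => /negP xr; apply/eqP; apply: contraNT xr => /Fr.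
Qed.

Lemma sum_supported_eq (T : eqType) (R : nmodType) (F : T -> R) (r1 r2 : seq T) :
  uniq r1 -> uniq r2 -> supported F r1 -> supported F r2 ->
  \sum_(x <- r1) F x = \sum_(x <- r2) F x.
Proof.
move=> u1 u2 F1 F2.
have drop_out r r' : supported F r' -> \sum_(x <- r | x \notin r') F x = 0.
  by move=> Fr'; apply: big1 => x xr'; apply/eqP; apply: contraNT xr' => /Fr' ->.
rewrite [LHS](bigID (mem r2)) [RHS](bigID (mem r1)) /= !drop_out // !addr0.
rewrite -big_filter -[RHS]big_filter; apply/perm_big/uniq_perm; rewrite ?filter_uniq //.
by move=> x; rewrite !mem_filter andbC.
Qed.

Lemma sum_mul_delta (T : eqType) (R : pzSemiRingType) (r : seq T) (F : T -> R) c :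
  uniq r -> \sum_(x <- r) F x * (x == c)%:R = (c \in r)%:R * F c.
Proof.
move=> ur; case: (boolP (c \in r)) => cr.
  rewrite (bigD1_seq c) //= eqxx mulr1 big1 ?addr0 ?mul1r // => x /negbTE ->.
  by rewrite mulr0.
rewrite mul0r big1_seq // => x /andP[_ xr].
by rewrite (_ : (x == c) = false) ?mulr0 //; apply: contraNF cr => /eqP <-.
Qed.

Lemma delta_expansion (T : eqType) (R : pzSemiRingType) (a : T -> R) (r : seq T) t :
  uniq r -> supported a r -> a t = \sum_(u <- r) a u * (t == u)%:R.
Proof.
move=> ur ar; under eq_bigr do rewrite eq_sym.
rewrite sum_mul_delta //; case: (boolP (t \in r)) => tr; first by rewrite mul1r.
by rewrite mul0r; apply/eqP; apply: contraNT tr => /ar.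
Qed.

Lemma supported_mull (T : eqType) (R : pzSemiRingType) (a s : T -> R) (r : seq T) :
  supported s r -> supported (fun x => a x * s x) r.
Proof. by move=> sr x nz; apply: sr; apply: contraNneq nz => ->; rewrite mulr0. Qed.

Section CountableDualExtension.
Variables (F : fieldType) (T : eqType) (en : nat -> T).
Hypothesis en_surj : forall x, exists i, en i = x.
Variable W : (T -> F) -> Prop.
Hypothesis W0 : W (fun _ => 0).
Hypothesis Wlin : forall a b s1 s2, W s1 -> W s2 -> W (fun x => a * s1 x + b * s2 x).
Variable e : T -> F.
Hypothesis eW : ~ W e.

Definition window n : seq T := undup (map en (iota 0 n)).

Lemma window_uniq n : uniq (window n). Proof. exact: undup_uniq. Qed.

Lemma mem_windowS n x : (x \in window n.+1) = (x \in window n) || (x == en n).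
Proof. by rewrite !mem_undup -addn1 iotaD map_cat mem_cat /= mem_seq1 add0n. Qed.

Lemma window_mono k m : (k <= m)%N -> {subset window k <= window m}.
Proof.
move=> km x; rewrite !mem_undup => /mapP[i]; rewrite !mem_iota /= add0n => ik ->.
by apply: map_f; rewrite mem_iota add0n (leq_trans ik km).
Qed.

Lemma window_cover (r : seq T) : exists N, {subset r <= window N}.
Proof.
elim: r => [|y r [N rN]]; first by exists 0%N.
have [i <-] := en_surj y; exists (maxn i.+1 N) => x; rewrite in_cons => /orP[/eqP ->|/rN xN].
  by apply: (window_mono (leq_maxl _ _)); rewrite mem_windowS eqxx orbT.
exact: (window_mono (leq_maxr _ _)).
Qed.

Lemma sum_windowS n (H : T -> F) : en n \notin window n ->
  \sum_(x <- window n.+1) H x = \sum_(x <- window n) H x + H (en n).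
Proof.
move=> fresh; rewrite -(big_seq1 +%R (en n) H) -big_cat; apply/perm_big/uniq_perm.
- exact: window_uniq.
- by rewrite cats1 rcons_uniq fresh window_uniq.
- by move=> x; rewrite mem_windowS mem_cat mem_seq1.
Qed.

Definition comb (s : T -> F) (t : F) : T -> F := fun x => s x + t * e x.

(* [phi], paired with functions living in [window n], kills [W] and sends [e]
   to 1: it pairs every [s + t e] with [s \in W] supported in the window to [t]. *)
Definition separating n (phi : T -> F) : Prop := forall s t, W s ->
  supported (comb s t) (window n) -> \sum_(x <- window n) phi x * comb s t x = t.

(* On the empty window only [0 = s + t e] occurs, which forces [t = 0] as [e \notin W]. *)
Lemma separating0 : separating 0 (fun _ => 0).
Proof.
move=> s t Ws st; rewrite big_nil.
have comb0 x : comb s t x = 0 by apply/eqP; apply: contraT => /st.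
have [//|tn0] := eqVneq t 0; exfalso; apply: eW.
have -> : e = (fun x => (- t^-1) * s x + 0 * s x).
  apply: funext => x; have := comb0 x; rewrite /comb => /eqP.
  by rewrite addr_eq0 => /eqP ->; field.
exact: Wlin.
Qed.

Lemma separating_keep n phi :
  (forall s t, W s -> supported (comb s t) (window n.+1) ->
     supported (comb s t) (window n)) ->
  separating n phi -> separating n.+1 phi.
Proof.
move=> shrink sep s t Ws st; have st' := shrink s t Ws st.
rewrite (sum_supported_eq (window_uniq n.+1) (window_uniq n)) ?sep //;
  exact: supported_mull.
Qed.

(* Otherwise some [w0 = s0 + t0 e] in view is nonzero at the new point [en n];
   the value there is forced by requiring that [w0] be paired to [t0]. *)
Lemma separating_extend n phi s0 t0 :
  en n \notin window n -> W s0 -> supported (comb s0 t0) (window n.+1) ->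
  comb s0 t0 (en n) != 0 -> separating n phi ->
  separating n.+1 (fun x => if x == en n
    then (t0 - \sum_(y <- window n) phi y * comb s0 t0 y) / comb s0 t0 (en n)
    else phi x).
Proof.
set c := en n; set w0 := comb s0 t0; set S0 := \sum_(y <- _) _ => fresh Ws0 w0n w0c sep.
move=> s t Ws st; rewrite sum_windowS // eqxx.
rewrite (eq_big_seq (fun x => phi x * comb s t x)); last first.
  by move=> x xn; case: eqP => // xc; move: fresh; rewrite -xc xn.
set lam := comb s t c / w0 c.
pose s' := fun x => 1 * s x + (- lam) * s0 x.
have comb' x : comb s' (t - lam * t0) x = comb s t x - lam * w0 x.
  by rewrite /w0 /comb /s'; ring.
have st' : supported (comb s' (t - lam * t0)) (window n).
  move=> x; rewrite comb' => nz.
  have xc : x != c by apply: contraNneq nz => ->; rewrite /lam mulfVK ?subrr.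
  have : x \in window n.+1.
    have [stx|/st //] := eqVneq (comb s t x) 0.
    by apply: w0n; apply: contraNneq nz => ->; rewrite stx mulr0 subrr.
  by rewrite mem_windowS (negbTE xc) orbF.
have -> : \sum_(x <- window n) phi x * comb s t x = (t - lam * t0) + lam * S0.
  rewrite -(sep s' _ (Wlin _ _ Ws Ws0) st') /S0 mulr_sumr -big_split /=.
  by apply: eq_bigr => x _; rewrite comb'; ring.
by rewrite /lam; field.
Qed.

Lemma separating_step n phi : separating n phi ->
  exists2 phi', separating n.+1 phi' & {in window n, phi' =1 phi}.
Proof.
move=> sep; have [seen|fresh] := boolP (en n \in window n).
  exists phi => //; apply: separating_keep sep => s t _ st x /st.
  by rewrite mem_windowS => /orP[// | /eqP ->].
case: (pselect (exists s0 t0, [/\ W s0, supported (comb s0 t0) (window n.+1)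
                                  & comb s0 t0 (en n) != 0])).
  move=> [s0 [t0 [Ws0 w0n w0c]]]; eexists; first exact: (separating_extend fresh Ws0 w0n w0c sep).
  by move=> x xn /=; case: eqP => // xc; move: fresh; rewrite -xc xn.
move=> unseen; exists phi => //; apply: separating_keep sep => s t Ws st x nz.
have := st x nz; rewrite mem_windowS => /orP[// | /eqP xc].
by case: unseen; exists s, t; split; rewrite -?xc.
Qed.

Definition refine n (p : {phi | separating n phi}) :
  {phi | separating n.+1 phi & {in window n, phi =1 sval p}} :=
  cid2 (separating_step (svalP p)).

Fixpoint approx n : {phi | separating n phi} :=
  if n is m.+1 then let q := refine (approx m) in exist _ (s2val q) (s2valP q)
  else exist _ _ separating0.

Lemma approx_agree k m : (k <= m)%N -> {in window k, sval (approx m) =1 sval (approx k)}.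
Proof.
move=> km x xk; elim: m km => [|m IH]; first by rewrite leqn0 => /eqP ->.
rewrite leq_eqVlt => /orP[/eqP -> //|]; rewrite ltnS => km.
by rewrite /= (s2valP' (refine (approx m))) ?IH // (window_mono km).
Qed.

(* The limit functional: its value at [x] is read off any window containing [x]. *)
Definition dual_fun (x : T) : F := sval (approx (sval (cid (en_surj x))).+1) x.

Lemma dual_fun_window m : {in window m, dual_fun =1 sval (approx m)}.
Proof.
move=> x xm; rewrite /dual_fun; case: cid => i ix.
have xi : x \in window i.+1 by rewrite mem_windowS ix eqxx orbT.
by rewrite -(approx_agree (leq_maxl i.+1 m) xi) (approx_agree (leq_maxr i.+1 m) xm).
Qed.

Lemma dual_fun_comb s t r : W s -> uniq r -> supported (comb s t) r ->
  \sum_(x <- r) dual_fun x * comb s t x = t.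
Proof.
move=> Ws ur sr; have [N rN] := window_cover r.
have sN : supported (comb s t) (window N) by move=> x /sr /rN.
rewrite (sum_supported_eq ur (window_uniq N) (supported_mull sr) (supported_mull sN)).
rewrite (eq_big_seq (fun x => sval (approx N) x * comb s t x)); last first.
  by move=> x xN; rewrite (dual_fun_window xN).
exact: (svalP (approx N)).
Qed.

Lemma countable_dual_separation : exists f : T -> F,
  (forall s r, W s -> uniq r -> supported s r -> \sum_(x <- r) f x * s x = 0) /\
  (forall r, uniq r -> supported e r -> \sum_(x <- r) f x * e x = 1).
Proof.
exists dual_fun; split.
  move=> s r Ws ur sr; have Es : comb s 0 = s by apply: funext => x; rewrite /comb mul0r addr0.
  by have := @dual_fun_comb s 0 r Ws ur; rewrite Es; apply.
move=> r ur er; have Ee : comb (fun _ => 0) 1 = e.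
  by apply: funext => x; rewrite /comb add0r mul1r.
by have := @dual_fun_comb _ 1 r W0 ur; rewrite Ee; apply.
Qed.

End CountableDualExtension.

(* A finitely generated group is countable: words in the generators enumerate it. *)
Lemma fg_enum (G : groupType) : finitely_generated G ->
  exists en : nat -> G, forall x, exists i, en i = x.
Proof.
case=> S genS.
pose ev := foldr (fun (p : bool * nat) g =>
  ((if p.1 then (nth 1%g S p.2)^-1 else nth 1%g S p.2) * g)%g) 1%g.
exists (fun n => if @pickle_inv (seq (bool * nat)) n is Some w then ev w else 1%g).
move=> x; have [w <-] : exists w, ev w = x.
  elim: (genS x) => [|s g sS _ [w <-]|s g sS _ [w <-]]; first by exists [::].
    by exists ((false, index s S) :: w); rewrite /= nth_index.
  by exists ((true, index s S) :: w); rewrite /= nth_index.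
by exists (pickle w); rewrite pickleK_inv.
Qed.

Section FiniteSupport.
Variable G : groupType.

Lemma fin_supp_supported (a : G -> CC) (r : seq G) : supported a r -> fin_supp a.
Proof. by move=> ar; apply: (sub_finite_set _ (finite_seq r)) => x /= /ar. Qed.

Definition supp_seq (a : G -> CC) : seq G :=
  finmap.enum_fset (fset_set [set g | a g != 0]).

Lemma supp_seq_uniq a : uniq (supp_seq a). Proof. exact: finmap.fset_uniq. Qed.

Lemma supp_seqP a : fin_supp a -> supported a (supp_seq a).
Proof. by move=> fa x nz; rewrite /supp_seq in_fset_set // inE. Qed.

End FiniteSupport.

Section TranslatesOfK.
Variables (G : groupType) (K : seq G).
Hypothesis uK : uniq K.

Definition trans_pts (u v : G) : seq G := [seq (u * k * v)%g | k <- K].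

Definition chi_trans (u v : G) : G -> CC := fun x => \sum_(k <- K) (x == u * k * v)%g%:R.

(* Translation is injective, so each translate has [size K] distinct points. *)
Lemma trans_pts_uniq u v : uniq (trans_pts u v).
Proof. by rewrite map_inj_uniq // => k1 k2 /mulIg /mulgI. Qed.

Lemma chi_trans_supported u v : supported (chi_trans u v) (trans_pts u v).
Proof.
move=> x; apply: contraR => xn; rewrite /chi_trans big1_seq // => k /andP[_ kK].
by case: eqP => // xe; move: xn; rewrite xe (map_f (fun k => (u * k * v)%g) kK).
Qed.

Lemma pair_chi_trans (f : G -> CC) (R : seq G) u v : uniq R ->
  {subset trans_pts u v <= R} ->
  \sum_(x <- R) f x * chi_trans u v x = \sum_(k <- K) f (u * k * v)%g.
Proof.
move=> uR sub; rewrite /chi_trans; under eq_bigr do rewrite mulr_sumr.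
rewrite exchange_big; apply: eq_big_seq => k kK.
by rewrite sum_mul_delta // sub ?mul1r // (map_f (fun k => (u * k * v)%g) kK).
Qed.

Lemma pompeiu_sum (f : G -> CC) u v :
  \sum_(k <- K) f (u * k * v)%g = \sum_(x <- undup (trans_pts u v)) f x.
Proof. by rewrite undup_id ?trans_pts_uniq // big_map. Qed.

(* The linear span of the translates [u K v]: a list of (coefficient, u, v). *)
Definition span_fun (l : seq (CC * G * G)) : G -> CC :=
  fun x => \sum_(p <- l) p.1.1 * chi_trans p.1.2 p.2 x.

Definition translate_span (s : G -> CC) : Prop := exists l, s = span_fun l.

Definition span_pts (l : seq (CC * G * G)) : seq G :=
  flatten [seq trans_pts p.1.2 p.2 | p <- l].

Lemma translate_span_lin a b s1 s2 : translate_span s1 -> translate_span s2 ->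
  translate_span (fun x => a * s1 x + b * s2 x).
Proof.
move=> [l1 ->] [l2 ->].
exists ([seq (a * p.1.1, p.1.2, p.2) | p <- l1] ++ [seq (b * p.1.1, p.1.2, p.2) | p <- l2]).
apply: funext => x; rewrite /span_fun big_cat !big_map /= !mulr_sumr.
by congr (_ + _); apply: eq_bigr => p _; rewrite mulrA.
Qed.

Lemma span_fun_supported l : supported (span_fun l) (span_pts l).
Proof.
move=> x; apply: contraR => xn; rewrite /span_fun big1_seq // => p /andP[_ pl].
have /eqP -> : chi_trans p.1.2 p.2 x == 0 by apply: contraR xn => /chi_trans_supported xp;
  apply/flattenP; exists (trans_pts p.1.2 p.2) => //; exact: map_f.
by rewrite mulr0.
Qed.

Lemma pair_span_fun (f : G -> CC) (l : seq (CC * G * G)) (R : seq G) :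
  uniq R -> {subset span_pts l <= R} ->
  \sum_(x <- R) f x * span_fun l x =
  \sum_(p <- l) p.1.1 * \sum_(k <- K) f (p.1.2 * k * p.2)%g.
Proof.
move=> uR sub; rewrite /span_fun; under eq_bigr do rewrite mulr_sumr.
rewrite exchange_big; apply: eq_big_seq => p pl.
rewrite -(pair_chi_trans f uR) ?mulr_sumr; last first.
  by move=> x xp; apply: sub; apply/flattenP; exists (trans_pts p.1.2 p.2) => //; exact: map_f.
by apply: eq_bigr => x _; rewrite mulrCA.
Qed.

Lemma conv_seq (f h : G -> CC) (r : seq G) g : uniq r -> supported h r ->
  conv f h g = \sum_(x <- r) f (g * x^-1)%g * h x.
Proof. by move=> ur hr; rewrite /conv (fsum_setT_seq ur) //; apply: supported_mull. Qed.

Lemma conv_chi_expand (a b : G -> CC) (ra rb : seq G) x : uniq ra -> uniq rb ->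
  supported a ra -> supported b rb ->
  conv (conv a (chi K)) b x = \sum_(u <- ra) \sum_(v <- rb) a u * b v * chi_trans u v x.
Proof.
move=> ua ub ar br; rewrite (@conv_seq _ _ rb x ub br) [RHS]exchange_big /=.
apply: eq_bigr => v _; rewrite (@conv_seq _ _ K _ uK); last first.
  by move=> y; rewrite /chi; case: ifP => // _; rewrite eqxx.
rewrite mulr_suml /chi_trans; under [RHS]eq_bigr do rewrite mulr_sumr.
rewrite [RHS]exchange_big /=; apply: eq_big_seq => k kK.
rewrite /chi kK mulr1 (delta_expansion (x * v^-1 * k^-1)%g ua ar) mulr_suml.
apply: eq_bigr => u _; rewrite mulrAC; congr (_ * _%:R).
by congr (nat_of_bool _); apply/eqP/eqP => [<-|->]; rewrite ?mulgVK ?mulgK.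
Qed.

Lemma translate_span0 : translate_span (fun _ => 0).
Proof. by exists [::]; apply: funext => x; rewrite /span_fun big_nil. Qed.

Lemma chi_trans_span u v : translate_span (chi_trans u v).
Proof. by exists [:: (1, u, v)]; apply: funext => x; rewrite /span_fun big_seq1 mul1r. Qed.

Lemma translate_span_fin s : translate_span s -> fin_supp s.
Proof. by move=> [l ->]; exact: (fin_supp_supported (@span_fun_supported l)). Qed.

Lemma ideal_sub_span : two_sided_ideal (chi K) `<=` translate_span.
Proof.
move=> f [n [A [B [AB ->]]]].
exists (flatten [seq [seq (A i u * B i v, u, v) | u <- supp_seq (A i), v <- supp_seq (B i)]
                 | i <- enum 'I_n]).
apply: funext => x; rewrite /span_fun big_flatten big_map big_enum /=.
apply: eq_bigr => i _; have [Ai Bi] := AB i.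
rewrite (conv_chi_expand x (supp_seq_uniq _) (supp_seq_uniq _) (supp_seqP Ai) (supp_seqP Bi)).
by rewrite big_allpairs_dep.
Qed.

(* Conversely each translate [chi_(uKv)] is [delta_u * chi_K * delta_v]. *)
Lemma span_sub_ideal : translate_span `<=` two_sided_ideal (chi K).
Proof.
move=> _ [l ->]; pose p0 : CC * G * G := (0, 1%g, 1%g).
pose delta (y : G) : G -> CC := fun x => (x == y)%:R.
have delta_supp y : supported (delta y) [:: y].
  by move=> x; rewrite mem_seq1 /delta; case: (x == y); rewrite ?eqxx.
exists (size l), (fun i u => (nth p0 l i).1.1 * delta (nth p0 l i).1.2 u),
  (fun i => delta (nth p0 l i).2); split.
  by move=> i; split; apply: fin_supp_supported; [apply: supported_mull | ]; apply: delta_supp.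
apply: funext => x; rewrite /span_fun (big_nth p0) big_mkord; apply: eq_bigr => i _.
rewrite (conv_chi_expand x _ _ (supported_mull (delta_supp _)) (delta_supp _)) //.
by rewrite !big_seq1 /delta !eqxx !mulr1.
Qed.

Lemma pompeiu_pair_span (f : G -> CC) l R :
  (forall g h, \sum_(x <- undup (trans_pts g h)) f x = 0) ->
  uniq R -> {subset span_pts l <= R} -> \sum_(x <- R) f x * span_fun l x = 0.
Proof.
move=> f0 uR sub; rewrite pair_span_fun //.
by apply: big1 => p _; rewrite pompeiu_sum f0 mulr0.
Qed.

(* If the ideal is everything, then every delta is a combination of translates,
   so a function summing to zero over all translates vanishes everywhere. *)
Lemma pompeiu_of_ideal_full : two_sided_ideal (chi K) = @CG G -> pompeiu (@calF G) K.
Proof.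
move=> full f _ f0; apply: funext => y.
pose delta : G -> CC := fun x => (x == y)%:R.
have [l dl] : translate_span delta.
  apply: ideal_sub_span; rewrite full; apply: (@fin_supp_supported _ _ [:: y]) => x.
  by rewrite mem_seq1 /delta; case: (x == y); rewrite ?eqxx.
have uR : uniq (undup (y :: span_pts l)) by exact: undup_uniq.
have -> : f y = \sum_(x <- undup (y :: span_pts l)) f x * delta x.
  by rewrite sum_mul_delta // mem_undup mem_head mul1r.
rewrite dl pompeiu_pair_span // => x xl.
by rewrite mem_undup in_cons xl orbT.
Qed.

(* If some finitely supported [e] lies outside the ideal, the countable dual
   separation produces a nonzero [f] summing to zero over every translate. *)
Lemma ideal_full_of_pompeiu :
  finitely_generated G -> pompeiu (@calF G) K -> two_sided_ideal (chi K) = @CG G.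
Proof.
move=> fg pomp; apply/seteqP; split=> [s /ideal_sub_span|e Ce]; first exact: translate_span_fin.
apply: contrapT => notI; have [en en_surj] := fg_enum fg.
have notW : ~ translate_span e by move/span_sub_ideal.
have [f [fW fe]] := countable_dual_separation en_surj translate_span0 translate_span_lin notW.
have f0 : f = fun _ => 0.
  apply: pomp => // g h.
  rewrite -pompeiu_sum -(@pair_chi_trans f (undup (trans_pts g h)) g h (undup_uniq _)).
    apply: fW (chi_trans_span g h) (undup_uniq _) _ => x /chi_trans_supported.
    by rewrite mem_undup.
  by move=> x; rewrite mem_undup.
have := fe _ (supp_seq_uniq e) (supp_seqP Ce).
by rewrite f0 big1 => [/eqP|x _]; rewrite ?mul0r // eq_sym oner_eq0.
Qed.

End TranslatesOfK.

Theorem theorem1 (G : groupType) (K : seq G) :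
  finitely_generated G -> uniq K ->
  (pompeiu (@calF G) K <-> two_sided_ideal (chi K) = @CG G).
Proof.
move=> fg uK; split; first exact: ideal_full_of_pompeiu.
exact: pompeiu_of_ideal_full.
Qed.
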